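(* Let $w\in G(m,p,n)$ be an element that either has a single cycle (of length $n$), or has exactly two cycles, whose weights are nonzero and sum to $0$ in $\mathbb Z/m\mathbb Z$. Then $[\mathrm{id},w]_{\mathrm{cdf}}=[\mathrm{id},w]_{\ell_R}$.
   Context: Let $m,p,n$ be positive integers with $p\mid m$ and $\zeta=e^{2\pi i/m}$. The group $G(m,1,n)$ consists of pairs $w=[u;a]$ with $u\in\mathfrak S_n$ (the underlying permutation) and $a=(a_1,\dots,a_n)\in(\mathbb Z/m\mathbb Z)^n$ (the weights); $[u;a]$ is identified with the $n\times n$ monomial matrix having entry $\zeta^{a_i}$ in position $(u(i),i)$ and zeros elsewhere, the group law is matrix multiplication, and the group acts on $\mathbb C^n$. A cycle of $w$ is a cycle of $u$ (fixed points count as cycles of size $1$); $c(w)$ is the number of cycles of $w$ and $c_0(w)$ the number of cycles of weight $0$, where the weight of a set $I\subseteq[n]$ (e.g. the underlying set of a cycle) is $\sum_{i\in I}a_i\in\mathbb Z/m\mathbb Z$, and $\mathrm{wt}(w)=\sum_{i=1}^n a_i$. Since $p\mid m$, it makes sense to say an element of $\mathbb Z/m\mathbb Z$ is $\equiv 0\pmod p$. $G(m,p,n)=\{w\in G(m,1,n):\mathrm{wt}(w)\equiv 0\pmod p\}$. A reflection is an element $g$ whose fixed space $\operatorname{fix}(g)=\ker(g-1)\subseteq\mathbb C^n$ has codimension $1$; $R$ is the set of reflections of $G(m,p,n)$ (they generate the group). $\ell_R(g)$ is the minimum number of reflections whose product is $g$, and $\operatorname{codim}\operatorname{fix}(g)=n-\dim\operatorname{fix}(g)$.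 For $f\in\{\ell_R,\operatorname{codim}\operatorname{fix}\}$ define $x\le_f y$ iff $f(x)+f(x^{-1}y)=f(y)$ (a partial order), and $[\mathrm{id},w]_f=\{u: u\le_f w\}$; the subscript $\mathrm{cdf}$ means $f=\operatorname{codim}\operatorname{fix}$. *)

From HB Require Import structures.
From mathcomp Require Import all_boot all_order all_algebra all_fingroup all_field.
Set Implicit Arguments. Unset Strict Implicit. Unset Printing Implicit Defensive.
Import GRing.Theory Num.Theory.
Local Open Scope ring_scope.

(* The monomial matrix [u; a]: entry z^(a_i) in position (u(i), i), 0 elsewhere.
   Weights a_i are natural-number representatives of elements of Z/mZ;
   z is a primitive m-th root of unity. *)
Definition gmx (n : nat) (z : algC) (u : 'S_n) (a : 'I_n -> nat) : 'M[algC]_n :=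
  \matrix_(r, c) if r == u c then z ^+ a c else 0.

(* wt(w) = sum a_i, and membership in G(m,p,n) : wt(w) = 0 mod p
   (well defined on Z/mZ since p | m). *)
Definition inG (n p : nat) (z : algC) (g : 'M[algC]_n) : Prop :=
  exists (u : 'S_n) (a : 'I_n -> nat),
    (p %| \sum_(i < n) a i)%N /\ g = gmx z u a.

(* dim fix(g) = dim ker(g - 1) acting on column vectors *)
Definition fixdim (n : nat) (g : 'M[algC]_n) : nat :=
  \rank (kermx (g - 1%:M)^T).

Definition cdf (n : nat) (g : 'M[algC]_n) : nat := (n - fixdim g)%N.

Definition is_refl (n p : nat) (z : algC) (g : 'M[algC]_n) : Prop :=
  inG p z g /\ cdf g = 1%N.

Definition prodmx (n : nat) (s : seq 'M[algC]_n) : 'M[algC]_n :=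
  foldr (fun r acc => r *m acc) 1%:M s.

Definition ellR (n p : nat) (z : algC) (g : 'M[algC]_n) (k : nat) : Prop :=
  (exists s : seq 'M[algC]_n,
      (forall r, r \in s -> is_refl p z r) /\ size s = k /\ prodmx s = g) /\
  (forall s : seq 'M[algC]_n,
      (forall r, r \in s -> is_refl p z r) -> prodmx s = g -> (k <= size s)%N).

Definition le_R (n p : nat) (z : algC) (x y : 'M[algC]_n) : Prop :=
  exists kx kxy ky, ellR p z x kx /\ ellR p z (invmx x *m y) kxy /\
                    ellR p z y ky /\ (kx + kxy = ky)%N.

Definition le_cdf (n : nat) (x y : 'M[algC]_n) : Prop :=
  (cdf x + cdf (invmx x *m y) = cdf y)%N.

Definition cwt (n : nat) (a : 'I_n -> nat) (I : {set 'I_n}) : nat :=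
  (\sum_(i in I) a i)%N.

From HB Require Import structures.
From mathcomp Require Import all_boot all_order all_algebra all_fingroup all_field.
From mathcomp Require Import zify.
Import GRing.Theory Num.Theory.
Local Open Scope ring_scope.
Set Implicit Arguments. Unset Strict Implicit. Unset Printing Implicit Defensive.

(* Write cdf(g) = rank(g - 1). It is subadditive and conjugation invariant, so
   a product of k reflections has cdf <= k; hence ell_R >= cdf, and both orders
   agree on [id, w] as soon as every y with cdf y + cdf (y^-1 w) <= n is a
   product of cdf y reflections.  Peeling off transposition-like reflections,
   each lowering cdf by one, writes y = t_1 ... t_k d with d diagonal and
   cdf y = k + cdf d, which reduces the claim to d.  A vector fixed by d^-1 w
   vanishes on every cycle of nonzero weight and is determined by one entry on
   each cycle of weight zero, so cdf (d^-1 w) >= n - #cycles >= n - 2 and d has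
   at most two nontrivial entries.  If it has two, both cycles of d^-1 w have
   weight zero; as w has total weight zero, so does d, whose two entries are
   then mutually inverse, making d a product of two reflections. *)

Section FixCodim.
Variables (F : fieldType) (n : nat).
Implicit Types (X Y P : 'M[F]_n) (v : 'rV[F]_n).

Definition fixcodim X := \rank (X - 1%:M).

Lemma fixcodim_le X : (fixcodim X <= n)%N.
Proof. exact: rank_leq_row. Qed.

Lemma fixcodim1 : fixcodim 1%:M = 0%N.
Proof. by rewrite /fixcodim subrr mxrank0. Qed.

Lemma fixcodim_eq0 X : (fixcodim X == 0%N) = (X == 1%:M).
Proof. by rewrite /fixcodim mxrank_eq0 subr_eq0. Qed.

Lemma fixcodim_le1 X (x : 'cV[F]_n) (y : 'rV[F]_n) :
  X - 1%:M = x *m y -> (fixcodim X <= 1)%N.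
Proof.
by rewrite /fixcodim => ->; apply: leq_trans (mxrankM_maxl _ _) (rank_leq_col _).
Qed.

Lemma fixcodim_mul X Y : (fixcodim (X *m Y) <= fixcodim X + fixcodim Y)%N.
Proof.
rewrite /fixcodim addnC.
have -> : X *m Y - 1%:M = X *m (Y - 1%:M) + (X - 1%:M).
  by rewrite mulmxBr mulmx1 addrA subrK.
by apply: leq_trans (mxrank_add _ _) _; rewrite leq_add2r mxrankM_maxr.
Qed.

Lemma fixcodim_conj P X : P \in unitmx -> fixcodim (invmx P *m X *m P) = fixcodim X.
Proof.
move=> uP; rewrite /fixcodim.
have -> : invmx P *m X *m P - 1%:M = invmx P *m (X - 1%:M) *m P.
  by rewrite mulmxBr mulmxBl mulmx1 mulVmx.
rewrite mxrankMfree ?row_free_unit //.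
by rewrite eqmxMfull // row_full_unit unitmx_inv.
Qed.

Lemma fix_kermxP X v : reflect (v *m X = v) (v <= kermx (X - 1%:M))%MS.
Proof. by rewrite (sameP sub_kermxP eqP) mulmxBr mulmx1 subr_eq0; apply: eqP. Qed.

Lemma fixcodim_lt X Y v :
  (forall w : 'rV_n, w *m X = w -> w *m Y = w) -> v *m Y = v -> v *m X != v ->
  (fixcodim Y < fixcodim X)%N.
Proof.
move=> fixXY vY vX.
set K := kermx (X - 1%:M); set L := kermx (Y - 1%:M).
have KL : (K <= L)%MS.
  apply/row_subP => i; apply/fix_kermxP/fixXY/fix_kermxP; exact: row_sub.
have vK : ~~ (v <= K)%MS by apply: contra vX => /fix_kermxP ->.
have ltK : (\rank K < \rank (K + v)%MS)%N.
  have [le eq] := mxrank_leqif_sup (addsmxSl K v).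
  by rewrite ltn_neqAle le andbT eq; apply: contra vK; apply: submx_trans (addsmxSr K v).
have leL : (\rank (K + v)%MS <= \rank L)%N.
  by apply: mxrankS; rewrite addsmx_sub KL; apply/fix_kermxP.
move: ltK leL; rewrite !mxrank_ker -/(fixcodim X) -/(fixcodim Y).
have := fixcodim_le X; have := fixcodim_le Y; lia.
Qed.

Lemma fixcodim_lbound X (R : {set 'I_n}) :
  (forall v, v *m X = v -> {in R, forall r, v 0 r = 0} -> v = 0) ->
  (n - #|R| <= fixcodim X)%N.
Proof.
move=> fixR.
pose Q : 'M[F]_(n, #|R|) := \matrix_(r, k) (r == enum_val k)%:R.
set K := kermx (X - 1%:M).
have KQ : (K :&: kermx Q)%MS = 0.
  apply/row_matrixP => i; rewrite row0; set w := row i _.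
  have wK : w *m X = w.
    by apply/fix_kermxP; apply: submx_trans (row_sub i _) (capmxSl _ _).
  have /sub_kermxP wQ : (w <= kermx Q)%MS.
    exact: submx_trans (row_sub i _) (capmxSr _ _).
  apply: fixR => // r rR.
  have := congr1 (fun x : 'rV_#|R| => x 0 (enum_rank_in rR r)) wQ.
  rewrite !mxE (bigD1 r) //= big1 => [|k kr]; rewrite !mxE (enum_rankK_in rR rR).
    by rewrite eqxx mulr1 addr0.
  by rewrite (negbTE kr) mulr0.
have := mxrank_mul_ker K Q; rewrite KQ mxrank0 addn0 mxrank_ker -/(fixcodim X).
have := rank_leq_col (K *m Q); have := fixcodim_le X; lia.
Qed.

End FixCodim.

Lemma cdfE n (X : 'M[algC]_n) : cdf X = fixcodim X.
Proof. by rewrite /cdf /fixdim mxrank_ker mxrank_tr subKn // fixcodim_le. Qed.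

Lemma prodmx_cat n (s1 s2 : seq 'M[algC]_n) :
  prodmx (s1 ++ s2) = prodmx s1 *m prodmx s2.
Proof. by elim: s1 => [|r s IH] /=; rewrite ?mul1mx // IH mulmxA. Qed.

Lemma dvdn_oppmodD m k : (0 < m)%N -> (m %| (m - k %% m) + k)%N.
Proof.
move=> m_gt0; rewrite {2}(divn_eq k m) addnCA subnK ?dvdn_add ?dvdn_mull //.
by rewrite ltnW // ltn_pmod.
Qed.

Lemma sum_perm n (u : 'S_n) (f : 'I_n -> nat) : (\sum_c f (u c) = \sum_c f c)%N.
Proof. by rewrite [RHS](reindex_inj (@perm_inj _ u)). Qed.

Lemma sum_ord_pair n (i j : 'I_n) (f : 'I_n -> nat) : i != j ->
  (\sum_c f c = f i + f j + \sum_(c | (c != i) && (c != j)) f c)%N.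
Proof. by move=> ij; rewrite (bigD1 i) //= (bigD1 j) 1?eq_sym //= addnA. Qed.

Lemma sum_porbits n (u : 'S_n) (f : 'I_n -> nat) :
  (\sum_c f c = \sum_(C in porbits u) cwt f C)%N.
Proof.
rewrite (partition_big_imset (porbit u)) /=.
apply: eq_bigr => C /imsetP[x _ ->].
by apply: eq_bigl => c; rewrite eq_porbit_mem.
Qed.

Lemma card_moved_mul_tperm n (u : 'S_n) i : u i != i ->
  (#|[set c | (u * tperm i (u i))%g c != c]| < #|[set c | u c != c]|)%N.
Proof.
move=> uii; apply: proper_card; apply/properP; split.
  apply/subsetP => c; rewrite !inE; apply: contra => /eqP ucc.
  rewrite permM ucc tpermD //; first by apply: contraNneq uii => ic; rewrite ic ucc.
  apply: contraNneq uii => uic.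
  have ci : c = i by apply: (@perm_inj _ u); rewrite ucc uic.
  by rewrite -{2}ci uic.
by exists i; rewrite !inE // permM tpermR eqxx.
Qed.

Section Monomial.
Variables (m n : nat) (z : algC).
Hypothesis hz : m.-primitive_root z.
Implicit Types (u v : 'S_n) (a b : 'I_n -> nat).

Let m_gt0 : (0 < m)%N := prim_order_gt0 hz.

Lemma prim_expr_dvd k : (m %| k)%N -> z ^+ k = 1.
Proof. by rewrite (prim_order_dvd hz) => /eqP. Qed.

Lemma prim_expr_neq0 k : z ^+ k != 0.
Proof.
rewrite expf_neq0 //; apply/negP => /eqP z0; move: (prim_expr_order hz).
by rewrite z0 expr0n eqn0Ngt m_gt0 => /eqP; rewrite eq_sym oner_eq0.
Qed.

Lemma gmxM u v a b :
  gmx z u a *m gmx z v b = gmx z (v * u) (fun c => a (v c) + b c)%N.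
Proof.
apply/matrixP => r c; rewrite !mxE (bigD1 (v c)) //= big1 => [|k kvc].
  by rewrite !mxE eqxx permM exprD addr0; case: eqP; rewrite ?mul0r ?mulr1.
by rewrite !mxE (negbTE kvc) mulr0.
Qed.

Lemma gmx_dvd1 a : (forall c, m %| a c)%N -> gmx z 1 a = 1%:M.
Proof.
move=> ma; apply/matrixP => r c; rewrite !mxE perm1 eq_sym.
by case: eqP => // _; rewrite prim_expr_dvd.
Qed.

Lemma gmx_neq1 u a c : u c != c -> gmx z u a != 1%:M.
Proof.
move=> ucc; apply/negP => /eqP/matrixP/(_ (u c) c)/eqP.
by rewrite !mxE eqxx (negbTE ucc) (negbTE (prim_expr_neq0 _)).
Qed.

(* [m - k %% m] represents [-k] in Z/mZ by a natural number. *)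
Definition wtinv u a c := (m - a ((u^-1)%g c) %% m)%N.

Lemma gmx_mulVmx u a : gmx z u^-1 (wtinv u a) *m gmx z u a = 1%:M.
Proof.
by rewrite gmxM mulgV; apply: gmx_dvd1 => c; rewrite /wtinv permK dvdn_oppmodD.
Qed.

Lemma gmx_unit u a : gmx z u a \in unitmx.
Proof. by case: (mulmx1_unit (gmx_mulVmx u a)). Qed.

Lemma gmx_inv u a : invmx (gmx z u a) = gmx z u^-1 (wtinv u a).
Proof.
by rewrite -[LHS]mul1mx -(gmx_mulVmx u a) -mulmxA mulmxV ?mulmx1 ?gmx_unit.
Qed.

Lemma gmx_row u a (w : 'rV[algC]_n) c :
  (w *m gmx z u a) 0 c = w 0 (u c) * z ^+ a c.
Proof.
rewrite !mxE (bigD1 (u c)) //= big1 => [|r ruc]; rewrite !mxE ?eqxx ?addr0 //.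
by rewrite (negbTE ruc) mulr0.
Qed.

Lemma gmx_fixP u a (w : 'rV[algC]_n) :
  reflect (forall c, w 0 (u c) * z ^+ a c = w 0 c) (w *m gmx z u a == w).
Proof.
apply: (iffP eqP) => [wf c|wf]; first by rewrite -[in RHS]wf gmx_row.
by apply/rowP => c; rewrite gmx_row wf.
Qed.

Lemma fixcodim_tperm (i j : 'I_n) b : i != j -> (m %| b i + b j)%N ->
  (forall c, c != i -> c != j -> m %| b c)%N -> fixcodim (gmx z (tperm i j) b) = 1%N.
Proof.
move=> ij mij mc; apply/eqP; rewrite eqn_leq lt0n fixcodim_eq0.
rewrite (gmx_neq1 _ (c := i)) ?tpermL 1?eq_sym // andbT.
apply: (@fixcodim_le1 _ _ _ (\col_r ((r == j)%:R - (r == i)%:R * z ^+ b j))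
                            (\row_c ((c == i)%:R * z ^+ b i - (c == j)%:R))).
have zij : z ^+ b j * z ^+ b i = 1 by rewrite -exprD addnC prim_expr_dvd.
have zji : z ^+ b i * z ^+ b j = 1 by rewrite mulrC.
have ji : (j == i) = false by rewrite eq_sym (negbTE ij).
apply/matrixP => r c; rewrite !mxE big_ord1 !mxE.
have [->|ci] := eqVneq c i; last have [->|cj] := eqVneq c j; last first.
  rewrite tpermD 1?eq_sym // mul0r subrr mulr0.
  by case: eqP => _; rewrite ?subr0 // prim_expr_dvd ?subrr ?mc.
all: rewrite ?tpermL ?tpermR.
all: by have [->|ri] := eqVneq r i; last have [_|rj] := eqVneq r j;
  rewrite /= ?(negbTE ij) ?ji /= ?(mul1r, mulr1, mul0r, mulr0, subr0, sub0r,
    mulNr, mulrN, opprK, oppr0, subrr, zij, zji).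
Qed.

Lemma fixcodim_diag (i : 'I_n) b : ~~ (m %| b i)%N ->
  (forall c, c != i -> m %| b c)%N -> fixcodim (gmx z 1 b) = 1%N.
Proof.
move=> mi mc; apply/eqP; rewrite eqn_leq lt0n fixcodim_eq0 andbC.
apply/andP; split.
  apply: contra mi => /eqP/matrixP/(_ i i)/eqP.
  by rewrite !mxE perm1 eqxx -(prim_order_dvd hz).
apply: (@fixcodim_le1 _ _ _ (\col_r ((r == i)%:R * (z ^+ b i - 1)))
                            (\row_c (c == i)%:R)).
apply/matrixP => r c; rewrite !mxE big_ord1 !mxE perm1.
have [->|ci] := eqVneq c i; first by case: (r == i); rewrite ?mul1r ?mul0r ?mulr1 ?subr0.
by rewrite mulr0; case: (r == c); rewrite ?subr0 // prim_expr_dvd ?subrr ?mc.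
Qed.


Section Cycles.
Variables (u : 'S_n) (a : 'I_n -> nat).

Definition zero_cycles := [set C in porbits u | (m %| cwt a C)%N].

Lemma gmx_fix_step (w : 'rV_n) c : w *m gmx z u a = w -> w 0 c = z ^+ a c * w 0 (u c).
Proof. by move/eqP/gmx_fixP/(_ c) <-; rewrite mulrC. Qed.

Lemma gmx_fix_cycle_wt (w : 'rV_n) c : w *m gmx z u a = w ->
  ~~ (m %| cwt a (porbit u c))%N -> w 0 c = 0.
Proof.
move=> wf mC.
have iter_step k d : w 0 d = z ^+ (\sum_(e <- traject u d k) a e) * w 0 (iter k u d).
  elim: k d => [|k IH] d; first by rewrite big_nil mul1r.
  by rewrite iterSr /= big_cons exprD -mulrA -IH -gmx_fix_step.
move: (iter_step #|porbit u c| c); rewrite iter_porbit big_uniq ?uniq_traject_porbit //.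
rewrite (eq_bigl (fun d => d \in porbit u c)) => [/eqP|d]; last by rewrite porbit_traject.
rewrite -subr_eq0 -{1}[w 0 c]mul1r -mulrBl mulf_eq0 subr_eq0 => /orP[|/eqP//].
by rewrite eq_sym -(prim_order_dvd hz) (negbTE mC).
Qed.

Lemma gmx_fix_porbit_eq0 (w : 'rV_n) c : w *m gmx z u a = w -> w 0 c = 0 ->
  {in porbit u c, forall d, w 0 d = 0}.
Proof.
move=> wf wc0 _ /porbitP[k ->]; elim: k => [|k IH]; first by rewrite expg0 perm1.
apply/eqP; move: (gmx_fix_step ((u ^+ k)%g c) wf).
by rewrite IH -permM -expgSr => /esym/eqP; rewrite mulf_eq0 (negbTE (prim_expr_neq0 _)).
Qed.

Lemma fixcodim_gmx_ge : (n - #|zero_cycles| <= fixcodim (gmx z u a))%N.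
Proof.
pose R := [set x | porbit u x \in zero_cycles & [forall y in porbit u x, x <= y]%N].
have porbit_inj : {in R &, injective (porbit u)}.
  move=> x y; rewrite !inE => /andP[_ /forall_inP xmin] /andP[_ /forall_inP ymin] xy.
  have y_x : y \in porbit u x by rewrite xy porbit_id.
  have x_y : x \in porbit u y by rewrite -xy porbit_id.
  by apply/val_inj/eqP; rewrite eqn_leq xmin ?ymin.
have RZ : (#|R| <= #|zero_cycles|)%N.
  rewrite -(card_in_imset porbit_inj); apply/subset_leq_card/subsetP => C.
  by case/imsetP => x; rewrite inE => /andP[xZ _] ->.
apply: leq_trans (leq_sub2l _ RZ) (fixcodim_lbound _) => w wf w0; apply/rowP => c.
rewrite mxE; have [mC|] := boolP (m %| cwt a (porbit u c))%N; last exact: gmx_fix_cycle_wt.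
have [x xc xmin] := @arg_minnP _ c (fun y => y \in porbit u c) val (porbit_id u c).
have xcE : porbit u x = porbit u c by apply/eqP; rewrite eq_porbit_mem.
have xR : x \in R.
  by rewrite !inE xcE imset_f //= mC; apply/forall_inP => y; apply: xmin.
by apply: (gmx_fix_porbit_eq0 wf (w0 x xR)); rewrite xcE porbit_id.
Qed.

End Cycles.

Definition wt_supp b := [set c | ~~ (m %| b c)%N].

Lemma card_wt_supp_le b : (#|wt_supp b| <= fixcodim (gmx z 1 b))%N.
Proof.
set S := wt_supp b; rewrite -[#|S|](addnK #|~: S|) cardsC card_ord.
apply: fixcodim_lbound => w wf w0; apply/rowP => c; rewrite mxE.
have [cS|] := boolP (c \in S); last by move=> cS; apply: w0; rewrite inE.
apply/eqP; move: (gmx_fix_step c wf); rewrite perm1 => /eqP.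
rewrite -subr_eq0 -{1}[w 0 c]mul1r -mulrBl mulf_eq0 subr_eq0 => /orP[|//].
by rewrite eq_sym -(prim_order_dvd hz) => mc; move: cS; rewrite inE mc.
Qed.

End Monomial.

Section Reflections.
Variables (m p n : nat) (z : algC).
Hypotheses (hz : m.-primitive_root z) (pm : (p %| m)%N).
Implicit Types (u v : 'S_n) (a b : 'I_n -> nat).

Let m_gt0 : (0 < m)%N := prim_order_gt0 hz.

Lemma inG_mul (X Y : 'M[algC]_n) : inG p z X -> inG p z Y -> inG p z (X *m Y).
Proof.
move=> [u [a [pa ->]]] [v [b [pb ->]]]; rewrite gmxM.
exists (v * u)%g, (fun c => a (v c) + b c)%N; split => //.
by rewrite big_split /= sum_perm dvdn_add.
Qed.

Lemma inG_inv (X : 'M[algC]_n) : inG p z X -> inG p z (invmx X).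
Proof.
move=> [u [a [pa ->]]]; rewrite (gmx_inv hz).
exists u^-1%g, (wtinv m u a); split => //.
rewrite /wtinv (sum_perm u^-1 (fun c => m - a c %% m)%N) -(dvdn_addr _ pa).
by rewrite addnC -big_split /= (dvdn_trans pm) // dvdn_sum // => c _; apply: dvdn_oppmodD.
Qed.

Lemma inG_unit (X : 'M[algC]_n) : inG p z X -> X \in unitmx.
Proof. by move=> [u [a [_ ->]]]; apply: (gmx_unit hz). Qed.

Section TpermWeight.
Variables (i j : 'I_n) (b : 'I_n -> nat).
Hypotheses (ij : i != j) (mij : (m %| b i + b j)%N).
Hypothesis mc : forall c, c != i -> c != j -> (m %| b c)%N.

Lemma dvdn_sum_tperm_wt : (m %| \sum_c b c)%N.
Proof.
by rewrite (sum_ord_pair _ ij) dvdn_add // dvdn_sum // => c /andP[ci cj]; apply: mc.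
Qed.

Lemma is_refl_tperm : is_refl p z (gmx z (tperm i j) b).
Proof.
split; last by rewrite cdfE (fixcodim_tperm hz).
by exists (tperm i j), b; split => //; apply: dvdn_trans pm dvdn_sum_tperm_wt.
Qed.

Lemma gmx_tperm_sqr : gmx z (tperm i j) b *m gmx z (tperm i j) b = 1%:M.
Proof.
rewrite gmxM tperm2; apply: (gmx_dvd1 hz) => c.
have [->|ci] := eqVneq c i; first by rewrite tpermL addnC.
have [->|cj] := eqVneq c j; first by rewrite tpermR.
by rewrite tpermD 1?eq_sym // dvdn_add ?mc.
Qed.

End TpermWeight.

Lemma is_refl_diag (i : 'I_n) b : (p %| \sum_c b c)%N -> ~~ (m %| b i)%N ->
  (forall c, c != i -> m %| b c)%N -> is_refl p z (gmx z 1 b).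
Proof.
move=> pb mi mc; split; last by rewrite cdfE (fixcodim_diag hz mi).
by exists 1%g, b.
Qed.

Section Peel.
Variables (u : 'S_n) (a : 'I_n -> nat) (i : 'I_n).
Hypothesis uii : u i != i.
Local Notation j := (u i).

(* Chosen so that [t *m gmx z u a] fixes [i] with weight 0, while [t] fixes
   every vector fixed by [gmx z u a]. *)
Definition peel_wt c := if c == i then a i else if c == j then (m - a i %% m)%N else 0%N.
Local Notation t := (gmx z (tperm i j) peel_wt).

Let ij : i != j. Proof. by rewrite eq_sym. Qed.

Let peel_wt_i : peel_wt i = a i.
Proof. by rewrite /peel_wt eqxx. Qed.

Let peel_wt_j : peel_wt j = (m - a i %% m)%N.
Proof. by rewrite /peel_wt eq_sym (negbTE ij) eqxx. Qed.

Let peel_wt_other c : c != i -> c != j -> peel_wt c = 0%N.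
Proof. by move=> ci cj; rewrite /peel_wt (negbTE ci) (negbTE cj). Qed.

Let dvdn_peel_wt_ij : (m %| peel_wt i + peel_wt j)%N.
Proof. by rewrite peel_wt_i peel_wt_j addnC dvdn_oppmodD. Qed.

Let dvdn_peel_wt_other c : c != i -> c != j -> (m %| peel_wt c)%N.
Proof. by move=> ci cj; rewrite peel_wt_other. Qed.

Lemma is_refl_peel : is_refl p z t.
Proof. exact: is_refl_tperm ij dvdn_peel_wt_ij dvdn_peel_wt_other. Qed.

Lemma peel_sqr : t *m t = 1%:M.
Proof. exact: gmx_tperm_sqr dvdn_peel_wt_ij dvdn_peel_wt_other. Qed.

Lemma dvdn_sum_peel_wt : (m %| \sum_c peel_wt c)%N.
Proof. exact: dvdn_sum_tperm_wt ij dvdn_peel_wt_ij dvdn_peel_wt_other. Qed.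

Lemma fix_peel (w : 'rV_n) : w *m gmx z u a = w -> w *m t = w.
Proof.
move/eqP/gmx_fixP => wf; apply/eqP/gmx_fixP => c.
have [->|ci] := eqVneq c i; first by rewrite tpermL peel_wt_i wf.
have [->|cj] := eqVneq c j; last by rewrite tpermD 1?eq_sym // peel_wt_other // mulr1.
by rewrite tpermR peel_wt_j -(wf i) -mulrA -exprD addnC (prim_expr_dvd hz) ?dvdn_oppmodD ?mulr1.
Qed.

Lemma fixcodim_peel : fixcodim (gmx z u a) = (fixcodim (t *m gmx z u a)).+1.
Proof.
apply/eqP; rewrite eqn_leq; apply/andP; split.
  rewrite -[X in fixcodim X]mul1mx -peel_sqr -mulmxA.
  by apply: leq_trans (fixcodim_mul _ _) _; rewrite -cdfE is_refl_peel.2.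
apply: (@fixcodim_lt _ _ _ _ (delta_mx 0 i)).
- by move=> w wf; rewrite mulmxA fix_peel.
- rewrite gmxM; apply/eqP/gmx_fixP => c; rewrite !mxE permM.
  have [->|ci] := eqVneq c i.
    by rewrite tpermR !eqxx peel_wt_j (prim_expr_dvd hz) ?dvdn_oppmodD ?mulr1.
  have /negbTE-> : tperm i j (u c) != i.
    apply: contra ci => /eqP tuc; apply/eqP/(@perm_inj _ u).
    by rewrite -[u c](tpermK i j) tuc tpermL.
  by rewrite mul0r.
- apply/negP => /gmx_fixP/(_ i); rewrite !mxE !eqxx (negbTE uii) mul0r.
  by move=> /eqP; rewrite eq_sym oner_eq0.
Qed.

End Peel.

Lemma gmx_factor_diag u a : exists s b, [/\ (forall r, r \in s -> is_refl p z r),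
  gmx z u a = prodmx s *m gmx z 1 b,
  fixcodim (gmx z u a) = (size s + fixcodim (gmx z 1 b))%N
  & (\sum_c b c = \sum_c a c %[mod m])%N].
Proof.
have [k] := ubnP #|[set c | u c != c]|; elim: k u a => // k IH u a moved_u.
have [->|u_neq1] := eqVneq u 1%g; first by exists [::], a; rewrite mul1mx.
have [i uii] : exists i, u i != i.
  apply/existsP; rewrite -negb_forall; apply: contra u_neq1 => /forallP uid.
  by apply/eqP/permP => c; rewrite perm1; apply/eqP.
set t := gmx z (tperm i (u i)) (peel_wt u a i).
pose b c := (peel_wt u a i (u c) + a c)%N.
have [|s [d [sR bE bfix wtd]]] := IH (u * tperm i (u i))%g b.
  exact: leq_trans (card_moved_mul_tperm uii) _.
have tyE : t *m gmx z u a = gmx z (u * tperm i (u i)) b by rewrite gmxM.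
exists (t :: s), d; split.
- by move=> r; rewrite inE => /predU1P[->|/sR //]; apply: is_refl_peel.
- by rewrite /= -mulmxA -bE -tyE mulmxA peel_sqr ?mul1mx.
- by rewrite (fixcodim_peel a uii) tyE bfix.
- rewrite wtd /b big_split /= (sum_perm u) -modnDml.
  by rewrite (eqP (dvdn_sum_peel_wt a uii)).
Qed.

Lemma gmx_diag_refl_factor b : (p %| \sum_c b c)%N ->
  (#|wt_supp m b| <= 1)%N \/ (#|wt_supp m b| = 2 /\ (m %| \sum_c b c)%N) ->
  exists s, [/\ (forall r, r \in s -> is_refl p z r),
    prodmx s = gmx z 1 b & size s = #|wt_supp m b|].
Proof.
move=> pb; have mb c : c \notin wt_supp m b -> (m %| b c)%N by rewrite inE negbK.
case=> [|[/eqP/cards2P[i [j [ij Sij]]] mSb]].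
  rewrite leq_eqVlt ltnS leqn0 => /orP[/cards1P[i Si]|/eqP S0].
    exists [:: gmx z 1 b]; rewrite /= mulmx1 Si cards1; split => // r.
    rewrite inE => /eqP ->; apply: (is_refl_diag (i := i)) => // [|c ci].
      by move: (set11 i); rewrite -Si inE.
    by apply: mb; rewrite Si inE.
  exists [::]; rewrite S0 /=; split => //; apply/esym/(gmx_dvd1 hz) => c.
  by apply: mb; rewrite (card0_eq S0).
have mc c : c != i -> c != j -> (m %| b c)%N.
  by move=> ci cj; apply: mb; rewrite Sij !inE negb_or ci cj.
have mij : (m %| b i + b j)%N.
  move: mSb; rewrite (sum_ord_pair _ ij) => /dvdn_add_eq ->.
  by apply: dvdn_sum => c /andP[ci cj]; apply: mc.
exists [:: gmx z (tperm i j) (fun=> 0%N); gmx z (tperm i j) b].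
rewrite Sij cards2 ij /= mulmx1 gmxM tperm2; split => // r.
by rewrite !inE => /orP[]/eqP->; apply: is_refl_tperm; rewrite ?dvdn0.
Qed.

End Reflections.

Lemma fixcodim_prodmx_refl n p (z : algC) (s : seq 'M[algC]_n) :
  (forall r, r \in s -> is_refl p z r) -> (fixcodim (prodmx s) <= size s)%N.
Proof.
elim: s => [|r s IH] sR /=; first by rewrite fixcodim1.
apply: leq_trans (fixcodim_mul _ _) _; rewrite -cdfE (sR r (mem_head _ _)).2 add1n ltnS.
by apply: IH => x xs; apply: sR; rewrite inE xs orbT.
Qed.

Lemma fixcodim_le_ellR n p (z : algC) (y : 'M[algC]_n) k :
  ellR p z y k -> (fixcodim y <= k)%N.
Proof. by case=> [[s [sR [<- <-]]] _]; apply: (fixcodim_prodmx_refl sR). Qed.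

Section ShortCycleType.
Variables (m p n : nat) (z : algC) (u : 'S_n) (a : 'I_n -> nat).
Hypotheses (pm : (p %| m)%N) (hz : m.-primitive_root z).
Hypothesis pa : (p %| \sum_c a c)%N.
Hypothesis porbits_le2 : (#|porbits u| <= 2)%N.
Hypothesis wt_two_cycles : #|porbits u| = 2 -> (m %| \sum_c a c)%N.

Let w := gmx z u a.

Lemma diag_wt_supp_small b :
  (fixcodim (gmx z 1 b) + fixcodim (invmx (gmx z 1 b) *m w) <= n)%N ->
  (#|wt_supp m b| <= 1)%N \/ (#|wt_supp m b| = 2 /\ (m %| \sum_c b c)%N).
Proof.
set b' := fun c => (wtinv m 1 b (u c) + a c)%N.
rewrite /w (gmx_inv hz) gmxM invg1 mulg1 -/b' => bound.
have Zsub : zero_cycles m u b' \subset porbits u.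
  by apply/subsetP => C; rewrite inE => /andP[].
have Z_le := subset_leq_card Zsub.
have S_le := card_wt_supp_le hz b; have Z_ge := fixcodim_gmx_ge hz u b'.
have [S_le1|S_gt1] := leqP #|wt_supp m b| 1; [by left | right].
have S2 : #|wt_supp m b| = 2 by lia.
have ZE : zero_cycles m u b' =i porbits u.
  by apply/(subset_cardP _ Zsub); lia.
split => //; have mb' : (m %| \sum_c b' c)%N.
  by rewrite (sum_porbits u) dvdn_sum // => C; rewrite -ZE inE => /andP[].
have ma : (m %| \sum_c a c)%N by apply: wt_two_cycles; lia.
rewrite big_split /= (sum_perm u) (dvdn_addl _ ma) in mb'.
rewrite -(dvdn_addl _ mb') -big_split /= dvdn_sum // => c _.
by rewrite /wtinv invg1 perm1 addnC dvdn_oppmodD ?(prim_order_gt0 hz).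
Qed.

Lemma refl_factor_fixcodim y : inG p z y ->
  (fixcodim y + fixcodim (invmx y *m w) <= n)%N ->
  exists s, [/\ (forall r, r \in s -> is_refl p z r), prodmx s = y & size s = fixcodim y].
Proof.
move=> yG bound; have yU := inG_unit hz yG.
case: (yG) => [uy [ay [pay yE]]].
have [s [b [sR yPd yfix wtb]]] := gmx_factor_diag hz pm uy ay; rewrite -yE in yPd yfix.
set d := gmx z 1 b in yPd yfix; have dU : d \in unitmx := gmx_unit hz 1 b.
have d_w : (fixcodim (invmx d *m w) <= size s + fixcodim (invmx y *m w))%N.
  have -> : invmx d *m w = (invmx d *m y) *m (invmx y *m w).
    by rewrite -!mulmxA (mulmxA y) mulmxV // mul1mx.
  apply: leq_trans (fixcodim_mul _ _) _; rewrite leq_add2r.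
  by rewrite yPd mulmxA fixcodim_conj // (fixcodim_prodmx_refl sR).
have pb : (p %| \sum_c b c)%N by rewrite /dvdn -(modn_dvdm _ pm) wtb modn_dvdm.
have [|t [tR tE tsize]] := gmx_diag_refl_factor hz pm pb.
  apply: diag_wt_supp_small; apply: leq_trans bound.
  by rewrite yfix (addnC (size s)) -addnA leq_add2l.
have dfix : fixcodim d = #|wt_supp m b|.
  apply/eqP; rewrite eqn_leq card_wt_supp_le // andbT -tsize /d -tE.
  exact: (fixcodim_prodmx_refl tR).
exists (s ++ t); split; first by move=> r; rewrite mem_cat => /orP[/sR|/tR].
  by rewrite prodmx_cat tE.
by rewrite size_cat yfix dfix tsize.
Qed.

Lemma ellR_fixcodim y : inG p z y ->
  (fixcodim y + fixcodim (invmx y *m w) <= n)%N -> ellR p z y (fixcodim y).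
Proof.
move=> yG bound; have [s [sR sy ssize]] := refl_factor_fixcodim yG bound.
split; first by exists s.
by move=> s' s'R <-; apply: fixcodim_prodmx_refl s'R.
Qed.

Lemma le_cdf_le_R x : inG p z x -> le_cdf x w <-> le_R p z x w.
Proof.
move=> xG; have wG : inG p z w by exists u, a.
set y := invmx x *m w; have yG : inG p z y := inG_mul (inG_inv hz pm xG) wG.
have wE : w = x *m y by rewrite /y mulmxA mulmxV ?mul1mx ?(inG_unit hz xG).
have wfix : ellR p z w (fixcodim w).
  apply: ellR_fixcodim => //.
  by rewrite mulVmx ?(inG_unit hz wG) // fixcodim1 addn0 fixcodim_le.
rewrite /le_cdf !cdfE; split => [xy|[kx [ky [kw [xk [yk [wk sum_k]]]]]]].
  exists (fixcodim x), (fixcodim y), (fixcodim w).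
  split; last split; last split => //.
    by apply: ellR_fixcodim => //; rewrite xy fixcodim_le.
  apply: ellR_fixcodim => //.
  rewrite -/y {1}wE mulmxA fixcodim_conj ?(inG_unit hz yG) //.
  by rewrite addnC xy fixcodim_le.
have kw_le : (kw <= fixcodim w)%N.
  by case: wfix => [[sw [swR [<- sw_prod]]] _]; apply: wk.2.
have w_le : (fixcodim w <= fixcodim x + fixcodim y)%N by rewrite {1}wE fixcodim_mul.
apply/eqP; rewrite -/y eqn_leq w_le andbT -sum_k in kw_le *.
exact: leq_trans (leq_add (fixcodim_le_ellR xk) (fixcodim_le_ellR yk)) kw_le.
Qed.

End ShortCycleType.

Theorem mainTheorem10 (m p n : nat) (z : algC) (u : 'S_n) (a : 'I_n -> nat) :
  (0 < m)%N -> (0 < p)%N -> (0 < n)%N -> (p %| m)%N ->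
  m.-primitive_root z ->
  (p %| \sum_(i < n) a i)%N ->
  (#|porbits u| = 1%N \/
   (#|porbits u| = 2%N /\
    (forall C, C \in porbits u -> (cwt a C %% m)%N <> 0%N) /\
    ((\sum_(C in porbits u) cwt a C) %% m)%N = 0%N)) ->
  forall x : 'M[algC]_n, inG p z x ->
    (le_cdf x (gmx z u a) <-> le_R p z x (gmx z u a)).
Proof.
move=> _ _ _ pm hz pa cycle_type x xG.
apply: (le_cdf_le_R pm hz pa) => // [|two].
  by case: cycle_type => [->|[->]].
case: cycle_type => [one|[_ [_ wt0]]]; first by rewrite one in two.
by rewrite /dvdn (sum_porbits u) wt0.
Qed.
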